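(* Let $N$ be a natural number. For any $\delta\subseteq{}^{\underline N}2$ and $Z\subseteq N$, \[\mathrm{HN}\big(L(\delta,Z)\cup R(\delta,Z)\big)=\min\{\mathrm{HN}(L(\delta,Z)),\mathrm{HN}(R(\delta,Z))\}.\]
   Context: $N=\{0,\ldots,N-1\}$; ${}^{\underline N}2$ is the set of all partial functions $\sigma$ with $\mathrm{dom}(\sigma)\subseteq N$ and values in $\{0,1\}$ (the empty function included); $|\sigma|$ is the size of $\sigma$ (equivalently of its domain). For $\sigma\in{}^{\underline N}2$ and $Z\subseteq N$, $\sigma\restriction Z=\{(a,b)\in\sigma: a\in Z\}$. $L(\delta,Z)=\{\sigma\restriction Z:\sigma\in\delta,\ |\sigma\restriction Z|\geq|\sigma\restriction(N\setminus Z)|\}$ and $R(\delta,Z)=\{\sigma\restriction(N\setminus Z):\sigma\in\delta,\ |\sigma\restriction Z|<|\sigma\restriction(N\setminus Z)|\}$. For $\delta_1,\delta_2\subseteq{}^{\underline N}2$, $\delta_1\preceq\delta_2$ means that for every $\sigma\in\delta_1$ there is $\rho\in\delta_2$ with $\rho\subseteq\sigma$. For $\delta\subseteq{}^{\underline N}2$, $\mathrm{hn}(\delta)$ is the maximum of $k+1$ over those $k\in\{0,\ldots,N-1\}$ such that for every $\delta'\subseteq\delta$ there is $\delta''\subseteq\delta'$ whose elements have pairwise disjoint domains and $|\bigcup_{\sigma\in\delta''}\mathrm{dom}(\sigma)|\geq k|\delta'|$; and $\mathrm{HN}(\delta)=\max\{\mathrm{hn}(\delta'):\delta'\subseteq{}^{\underline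 N}2,\ \delta\preceq\delta'\}$. *)

From mathcomp Require Import all_boot all_order.
Set Implicit Arguments. Unset Strict Implicit. Unset Printing Implicit Defensive.

(* A partial function N -> 2 (N = {0,...,N-1}) is a finite function
   'I_N -> option bool; None means "undefined". *)
Definition pfun (N : nat) := {ffun 'I_N -> option bool}.

Section Defs.
Variable N : nat.

Definition dom (s : pfun N) : {set 'I_N} := [set i | s i != None].

Definition psize (s : pfun N) : nat := #|dom s|.

Definition restr (s : pfun N) (Z : {set 'I_N}) : pfun N :=
  [ffun i => if i \in Z then s i else None].

Definition psub (r s : pfun N) : bool :=
  [forall i, (r i != None) ==> (r i == s i)].

Definition Lset (d : {set pfun N}) (Z : {set 'I_N}) : {set pfun N} :=
  [set restr s Z | s in d & psize (restr s (~: Z)) <= psize (restr s Z)].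

Definition Rset (d : {set pfun N}) (Z : {set 'I_N}) : {set pfun N} :=
  [set restr s (~: Z) | s in d & psize (restr s Z) < psize (restr s (~: Z))].

Definition preceq (d1 d2 : {set pfun N}) : bool :=
  [forall s in d1, exists r in d2, psub r s].

Definition pw_disjoint (d : {set pfun N}) : bool :=
  [forall s in d, forall r in d, (s != r) ==> [disjoint dom s & dom r]].

Definition hn_prop (d : {set pfun N}) (k : nat) : bool :=
  [forall d1 : {set pfun N}, (d1 \subset d) ==>
     [exists d2 : {set pfun N}, [&& d2 \subset d1, pw_disjoint d2 &
        k * #|d1| <= #|\bigcup_(s in d2) dom s| ]]].

(* hn(delta) = max{k+1 : k in {0..N-1}, hn_prop k}; (0 if no such k, i.e. N = 0) *)
Definition hn (d : {set pfun N}) : nat :=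
  \max_(k < N | hn_prop d k) k.+1.

Definition HN (d : {set pfun N}) : nat :=
  \max_(d' : {set pfun N} | preceq d d') hn d'.

End Defs.

From mathcomp Require Import all_boot all_order.
Set Implicit Arguments. Unset Strict Implicit.

(* L(d,Z) lives on Z and R(d,Z) on its complement.  For families with
   domains in disjoint sets X and Y, a witness of hn_prop for the union is
   the union of witnesses for the two parts, so hn(A u B) >= min(hn A, hn B);
   and a cover d' of A (with A preceq d') can be shrunk to its members with
   domain inside X, which still covers A and has no smaller hn.  Hence the
   same holds for HN, while the reverse inequality is antitonicity of HN. *)

Section HN.
Variable N : nat.
Implicit Types (d A B C D : {set pfun N}) (X Y Z : {set 'I_N}).

Lemma hn_propW d k m : m <= k -> hn_prop d k -> hn_prop d m.
Proof.
move=> le_mk /forallP hd; apply/forallP => d1; apply/implyP => d1d.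
have /existsP[d2 /and3P[d21 pw_d2 big_d2]] := implyP (hd d1) d1d.
apply/existsP; exists d2; rewrite d21 pw_d2 /=.
exact: leq_trans (leq_mul le_mk (leqnn _)) big_d2.
Qed.

Lemma hn_propS A B k : A \subset B -> hn_prop B k -> hn_prop A k.
Proof.
move=> AB /forallP hB; apply/forallP => d1; apply/implyP => d1A.
exact: implyP (hB d1) (subset_trans d1A AB).
Qed.

Lemma ltn_hn d m : (m < hn d) = (m < N) && hn_prop d m.
Proof.
apply/idP/andP => [lt_m_hn | [lt_mN hd]].
  have lt_mN : m < N.
    by apply: leq_trans lt_m_hn _; apply/bigmax_leqP => k _; apply: ltn_ord.
  split=> //; apply: contraLR lt_m_hn => not_hd; rewrite -leqNgt.
  apply/bigmax_leqP => k hdk; rewrite leqNgt ltnS.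
  by apply: contra not_hd => le_km; apply: hn_propW hdk.
exact: (@leq_bigmax_cond _ _ (fun k : 'I_N => k.+1) (Ordinal lt_mN) hd).
Qed.

Lemma hn_subset A B : A \subset B -> hn B <= hn A.
Proof.
move=> AB; apply/bigmax_leqP => k hBk.
by rewrite ltn_hn ltn_ord (hn_propS AB hBk).
Qed.

Lemma psub_dom (r s : pfun N) : psub r s -> dom r \subset dom s.
Proof.
move=> /forallP rs; apply/subsetP => i; rewrite !inE => ri.
by have /eqP <- := implyP (rs i) ri.
Qed.

Lemma dom_restr (s : pfun N) Z : dom (restr s Z) \subset Z.
Proof.
by apply/subsetP => i; rewrite !inE ffunE; case: (i \in Z); rewrite ?eqxx.
Qed.

Section Separated.
Variables X Y : {set 'I_N}.
Hypothesis disXY : [disjoint X & Y].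

Section Families.
Variables A B : {set pfun N}.
Hypotheses (domA : {in A, forall s, dom s \subset X})
  (domB : {in B, forall s, dom s \subset Y}).

Lemma pw_disjointU : pw_disjoint A -> pw_disjoint B -> pw_disjoint (A :|: B).
Proof.
move=> pwA pwB.
have disAB s r : s \in A -> r \in B -> [disjoint dom s & dom r].
  by move=> /domA sX /domB rY; apply: disjointWl sX (disjointWr rY disXY).
apply/forall_inP => s sAB; apply/forall_inP => r rAB; apply/implyP => neq_sr.
move: sAB rAB; rewrite !inE => /orP[sA|sB] /orP[rA|rB].
- by move/forall_inP/(_ s sA)/forall_inP/(_ r rA)/implyP: pwA; apply.
- exact: disAB.
- by rewrite disjoint_sym; apply: disAB.
- by move/forall_inP/(_ s sB)/forall_inP/(_ r rB)/implyP: pwB; apply.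
Qed.

Lemma card_bigcup_domU :
  #|\bigcup_(s in A :|: B) dom s| =
    #|\bigcup_(s in A) dom s| + #|\bigcup_(s in B) dom s|.
Proof.
rewrite bigcup_setU cardsU.
have /disjoint_setI0 -> : [disjoint \bigcup_(s in A) dom s & \bigcup_(s in B) dom s].
  apply: disjointWl (disjointWr _ disXY); apply/bigcupsP => s.
  - exact: domA.
  - exact: domB.
by rewrite cards0 subn0.
Qed.

End Families.

Lemma hn_propU A B k :
  {in A, forall s, dom s \subset X} -> {in B, forall s, dom s \subset Y} ->
  hn_prop A k -> hn_prop B k -> hn_prop (A :|: B) k.
Proof.
move=> domA domB /forallP hA /forallP hB; apply/forallP => d1; apply/implyP => d1AB.
have /existsP[dA /and3P[dA1 pw_dA big_dA]] := implyP (hA (d1 :&: A)) (subsetIr _ _).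
have /existsP[dB /and3P[dB1 pw_dB big_dB]] := implyP (hB (d1 :&: B)) (subsetIr _ _).
have [dAA dA_d1] : dA \subset A /\ dA \subset d1.
  by rewrite !(subset_trans dA1) ?subsetIl ?subsetIr.
have [dBB dB_d1] : dB \subset B /\ dB \subset d1.
  by rewrite !(subset_trans dB1) ?subsetIl ?subsetIr.
have domdA : {in dA, forall s, dom s \subset X} by move=> s /(subsetP dAA)/domA.
have domdB : {in dB, forall s, dom s \subset Y} by move=> s /(subsetP dBB)/domB.
apply/existsP; exists (dA :|: dB).
rewrite subUset dA_d1 dB_d1 (pw_disjointU domdA domdB) //=.
rewrite (card_bigcup_domU domdA domdB).
apply: leq_trans (leq_add big_dA big_dB); rewrite -mulnDr leq_mul2l.
have d1E : d1 = (d1 :&: A) :|: (d1 :&: B) by rewrite -setIUr; apply/esym/setIidPl.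
by rewrite {1}d1E cardsU leq_subr orbT.
Qed.

Lemma hn_setU A B :
  {in A, forall s, dom s \subset X} -> {in B, forall s, dom s \subset Y} ->
  minn (hn A) (hn B) <= hn (A :|: B).
Proof.
move=> domA domB; case hAB: (minn (hn A) (hn B)) => [|m] //.
have := geq_minl (hn A) (hn B); have := geq_minr (hn A) (hn B).
rewrite hAB !ltn_hn => /andP[_ hB] /andP[lt_mN hA].
by rewrite lt_mN (hn_propU domA domB).
Qed.

End Separated.

Lemma preceq_subset A B C : A \subset B -> preceq B C -> preceq A C.
Proof.
by move=> AB /forall_inP BC; apply/forall_inP => s /(subsetP AB)/BC.
Qed.

Lemma preceqU A B C D : preceq A C -> preceq B D -> preceq (A :|: B) (C :|: D).
Proof.
move=> /forall_inP AC /forall_inP BD; apply/forall_inP => s.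
rewrite inE => /orP[/AC|/BD] /exists_inP[r r_in rs];
  by apply/exists_inP; exists r; rewrite // inE r_in ?orbT.
Qed.

Lemma preceq_dom A d X :
  {in A, forall s, dom s \subset X} -> preceq A d ->
  preceq A [set r in d | dom r \subset X].
Proof.
move=> domA /forall_inP Ad; apply/forall_inP => s sA.
have /exists_inP[r rd rs] := Ad s sA.
apply/exists_inP; exists r => //; rewrite inE rd.
exact: subset_trans (psub_dom rs) (domA s sA).
Qed.

Lemma hn_le_HN A d : preceq A d -> hn d <= HN A.
Proof. exact: (@leq_bigmax_cond _ (preceq A) (@hn N)). Qed.

Lemma HN_subset A B : A \subset B -> HN B <= HN A.
Proof.
by move=> AB; apply/bigmax_leqP => d Bd; apply/hn_le_HN/(preceq_subset AB).
Qed.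

Lemma HN_witness A : {d | preceq A d & HN A = hn d}.
Proof.
have [|d Ad HNd] := @eq_bigmax_cond _ (fun d => preceq A d) (@hn N);
  last by exists d.
apply/card_gt0P; exists setT; apply/forall_inP => s _.
by apply/exists_inP; exists s; rewrite ?inE //; apply/forall_inP.
Qed.

Lemma HN_witness_dom A X :
  {in A, forall s, dom s \subset X} ->
  {d | preceq A d & HN A <= hn d /\ {in d, forall r, dom r \subset X}}.
Proof.
move=> domA; have [d Ad ->] := HN_witness A.
exists [set r in d | dom r \subset X]; first exact: preceq_dom.
split; first by apply: hn_subset; apply/subsetP => r; rewrite inE => /andP[].
by move=> r; rewrite inE => /andP[].
Qed.

Lemma HN_setU X Y A B :
  [disjoint X & Y] ->
  {in A, forall s, dom s \subset X} -> {in B, forall s, dom s \subset Y} ->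
  HN (A :|: B) = minn (HN A) (HN B).
Proof.
move=> disXY domA domB; apply/eqP.
rewrite eqn_leq leq_min !HN_subset ?subsetUl ?subsetUr //=.
have [dA AdA [le_A domdA]] := HN_witness_dom domA.
have [dB BdB [le_B domdB]] := HN_witness_dom domB.
apply: leq_trans (hn_le_HN (preceqU AdA BdB)).
apply: leq_trans (hn_setU disXY domdA domdB).
by rewrite leq_min (leq_trans (geq_minl _ _) le_A) (leq_trans (geq_minr _ _) le_B).
Qed.

End HN.

Theorem theorem6p27 (N : nat) (d : {set pfun N}) (Z : {set 'I_N}) :
  HN (Lset d Z :|: Rset d Z) = minn (HN (Lset d Z)) (HN (Rset d Z)).
Proof.
apply: (@HN_setU _ Z (~: Z)).
- by rewrite -subsets_disjoint.
- by move=> s /imsetP[t _ ->]; apply: dom_restr.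
- by move=> s /imsetP[t _ ->]; apply: dom_restr.
Qed.
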